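(* Let $T$ be a tree of order $n$ and dissociation number $\psi$. If $v$ is a leaf of $T$ such that $\psi(T-v)=\psi(T)$, then $\Phi_{\overline{v}}(T)\le \min\{\Phi_v^0(T),\Phi_v^1(T)\}$ and $\Phi_{\overline{v}}(T)\le \frac{1}{3}\Phi(T)$.
   Context: All graphs are finite, simple and undirected. A dissociation set in a graph $G$ is a vertex subset $F$ such that the induced subgraph $G[F]$ has maximum degree at most $1$; a maximum dissociation set is one of maximum cardinality, and the dissociation number $\psi(G)$ is that cardinality. Let $MD(G)$ be the set of all maximum dissociation sets of $G$ and $\Phi(G)=|MD(G)|$. For a vertex $v$: $\Phi_{\overline{v}}(G)=|\{F\in MD(G): v\notin F\}|$, $\Phi_v^0(G)=|\{F\in MD(G): v\in F,\ d_{G[F]}(v)=0\}|$, $\Phi_v^1(G)=|\{F\in MD(G): v\in F,\ d_{G[F]}(v)=1\}|$. A leaf is a vertex of degree exactly one; $T-v$ denotes $T$ with $v$ deleted. *)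

From mathcomp Require Import all_boot all_order.
Set Implicit Arguments. Unset Strict Implicit. Unset Printing Implicit Defensive.

Definition simple_graph (T : finType) (e : rel T) : Prop :=
  symmetric e /\ irreflexive e.

Section Dissoc.
Variables (T : finType) (e : rel T).

Definition nbhd (x : T) : {set T} := [set y | e x y].

Definition deg_in (F : {set T}) (x : T) : nat := #|nbhd x :&: F|.

Definition edges : {set {set T}} := [set [set x; y] | x in T, y in T & e x y].

Definition connected_graph : Prop := forall x y : T, connect e x y.

Definition is_tree : Prop :=
  simple_graph e /\ 0 < #|T| /\ connected_graph /\ #|edges| = #|T| - 1.

Definition leaf (v : T) : bool := #|nbhd v| == 1.

(* dissociation set of the induced subgraph G[S] (S = vertex set of the
   subgraph; S = setT is G itself, S = [set~ v] is G - v) *)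
Definition dissoc_in (S F : {set T}) : bool :=
  (F \subset S) && [forall x in F, deg_in F x <= 1].

Definition psi_in (S : {set T}) : nat :=
  \max_(F : {set T} | dissoc_in S F) #|F|.

Definition psi : nat := psi_in setT.

Definition MD : {set {set T}} :=
  [set F | dissoc_in setT F & #|F| == psi].

Definition Phi : nat := #|MD|.
Definition Phi_bar (v : T) : nat := #|[set F in MD | v \notin F]|.
Definition Phi0 (v : T) : nat := #|[set F in MD | (v \in F) && (deg_in F v == 0)]|.
Definition Phi1 (v : T) : nat := #|[set F in MD | (v \in F) && (deg_in F v == 1)]|.
End Dissoc.

From mathcomp Require Import all_boot all_order.
Set Implicit Arguments. Unset Strict Implicit. Unset Printing Implicit Defensive.

(** Let u be the neighbour of the leaf v.  A maximum dissociation set F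
   avoiding v contains u, and u has exactly one neighbour w in F: otherwise
   F + v would be a larger dissociation set.  Hence F - u + v and F - w + v
   are maximum dissociation sets in which v has degree 0 and 1 respectively.
   Both maps are injective; for the second, if F1 - w1 = F2 - w2 with
   w1 <> w2, then F1 - u + w2 + v would be a dissociation set larger than
   F1.  Since the sets avoiding v, those with v isolated and those with v of
   degree 1 are disjoint classes of MD, 3 Phi_bar <= Phi follows. *)

Lemma setU1_setD1_eq (T : finType) (x a b : T) (A B : {set T}) :
  x \notin A -> x \notin B -> x |: (A :\ a) = x |: (B :\ b) -> A :\ a = B :\ b.
Proof.
move=> xA xB eqAB.
have xAa : x \notin A :\ a by rewrite !inE (negbTE xA) andbF.
have xBb : x \notin B :\ b by rewrite !inE (negbTE xB) andbF.
by rewrite -(setU1K xAa) -(setU1K xBb) eqAB.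
Qed.

Lemma setD_setI1 (T : finType) (w : T) (A B : {set T}) :
  A :&: B = [set w] -> B :\: A = B :\ w.
Proof.
move/setP=> ABw; apply/setP => y; have := ABw y; rewrite !inE.
by case: (y \in B); rewrite ?andbT ?andbF // => ->.
Qed.

Section Dissociation.
Variables (T : finType) (e : rel T).
Hypotheses (e_sym : symmetric e) (e_irr : irreflexive e).

Definition dissociated (F : {set T}) : Prop :=
  forall x y z, x \in F -> y \in F -> z \in F -> e x y -> e x z -> y = z.

Lemma dissociatedP F : dissoc_in e setT F <-> dissociated F.
Proof.
split.
- case/andP=> _ /forall_inP degF x y z xF yF zF exy exz.
  by apply: (card_le1_eqP (degF x xF)); rewrite !inE ?exy ?exz ?yF ?zF.
- move=> disF; rewrite /dissoc_in subsetT; apply/forall_inP => x xF.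
  apply/card_le1_eqP => y z; rewrite !inE => /andP[exy yF] /andP[exz zF].
  exact: (disF x).
Qed.

Lemma dissociated_subset (F G : {set T}) :
  F \subset G -> dissociated G -> dissociated F.
Proof. by move=> /subsetP sFG disG x y z /sFG xG /sFG yG /sFG zG; apply: disG. Qed.

Lemma dissociated_setU1 F x :
  dissociated F ->
  (forall y z, y \in F -> z \in F -> e x y -> e x z -> y = z) ->
  (forall y z, y \in F -> z \in F -> e x y -> ~~ e y z) ->
  dissociated (x |: F).
Proof.
move=> disF xnb1 xnb_iso a b c aF bF cF eab eac.
have not_x y : e x y -> y \in x |: F -> y \in F.
  by move=> exy /setU1P[yx|//]; move: exy; rewrite yx e_irr.
case: (eqVneq a x) => [ax|xa].
  by subst a; exact: xnb1 (not_x b eab bF) (not_x c eac cF) eab eac.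
have aF' : a \in F by move: aF; rewrite in_setU1 (negbTE xa).
have a_iso y : e a x -> y \in F -> e a y -> False.
  by move=> eax yF eay; move: (xnb_iso a y aF' yF); rewrite e_sym eax eay => /(_ isT).
case/setU1P: bF eab => [-> eax |bF eab]; case/setU1P: cF eac => [-> |cF eac] //.
- by case: (a_iso c eax cF eac).
- by move=> eax; case: (a_iso b eax bF eab).
- exact: (disF a).
Qed.

Lemma nbhd_setI1 u F w : nbhd e u :&: F = [set w] -> e u w /\ w \in F.
Proof.
move=> Nw; have: w \in nbhd e u :&: F by rewrite Nw set11.
by rewrite inE /nbhd inE => /andP[].
Qed.

Lemma card_le_psi F : dissociated F -> #|F| <= psi e.
Proof. by move/dissociatedP=> disF; rewrite /psi /psi_in (leq_bigmax_cond _ disF). Qed.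

Lemma MDP F : F \in MD e <-> dissociated F /\ #|F| = psi e.
Proof.
rewrite inE; split; first by case/andP=> /dissociatedP ? /eqP.
by case=> /dissociatedP -> ->; rewrite eqxx.
Qed.

Lemma Phi_classes v : Phi_bar e v + Phi0 e v + Phi1 e v <= Phi e.
Proof.
rewrite /Phi_bar /Phi0 /Phi1 /Phi; set M := MD e.
rewrite -[#|M|]sum1_card -!sum1dep_card !big_mkcondr -!big_split /=.
apply: leq_sum => F _; case: (v \in F); case: (deg_in e F v) => [|[|n]] //.
Qed.

Lemma dissociated_exchange F1 F2 u w1 w2 :
  dissociated F1 -> dissociated F2 -> u \in F1 -> u \in F2 ->
  w1 \in F1 -> e u w1 -> w2 \in F2 -> e u w2 -> F1 :\ w1 = F2 :\ w2 ->
  dissociated (w2 |: (F1 :\ u)).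
Proof.
move=> dis1 dis2 uF1 uF2 w1F1 euw1 w2F2 euw2 F12.
have w2_nb y : y \in F1 :\ u -> e w2 y -> y = w1.
  rewrite in_setD1 => /andP[yu yF1] ew2y; case: (eqVneq y w1) => // yw1.
  have /setD1P[_ yF2] : y \in F2 :\ w2 by rewrite -F12 in_setD1 yw1.
  have ew2u : e w2 u by rewrite e_sym.
  by rewrite (dis2 w2 y u) ?eqxx in yu.
apply: dissociated_setU1 => [|y z yF zF ew2y ew2z|y z yF zF ew2y].
- exact: dissociated_subset (subsetDl F1 _) dis1.
- by rewrite (w2_nb y yF ew2y) (w2_nb z zF ew2z).
- rewrite (w2_nb y yF ew2y); apply/negP => ew1z; move: zF; rewrite in_setD1.
  case/andP=> zu zF1; have euw1' : e w1 u by rewrite e_sym.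
  by rewrite (dis1 w1 z u) ?eqxx in zu.
Qed.

Section Leaf.
Variables v u : T.
Hypothesis nbhd_v : nbhd e v = [set u].

Lemma adj_leaf y : e v y = (y == u).
Proof. by move/setP/(_ y): nbhd_v; rewrite !inE. Qed.

Lemma leaf_nb_neq : u != v.
Proof. by apply/eqP => uv; move: (adj_leaf v); rewrite e_irr -uv eqxx. Qed.

Lemma deg_in_leaf G : deg_in e G v = (u \in G).
Proof.
rewrite /deg_in nbhd_v; case: (boolP (u \in G)) => uG.
  by apply/eqP/cards1P; exists u; apply/setP => y; rewrite !inE andb_idr // => /eqP->.
apply/eqP; rewrite cards_eq0 -subset0; apply/subsetP => y.
by rewrite !inE => /andP[/eqP-> /(negP uG)].
Qed.

Lemma dissociated_setU1_leaf G :
  dissociated G -> (u \in G -> deg_in e G u = 0) -> dissociated (v |: G).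
Proof.
move=> disG uG_iso; apply: dissociated_setU1 => // [y z _ _|y z yG zG].
  by rewrite !adj_leaf => /eqP-> /eqP->.
rewrite adj_leaf => /eqP yu; subst y; apply/negP => euz.
by move/eqP: (uG_iso yG); rewrite cards_eq0 => /eqP/setP/(_ z); rewrite !inE euz zG.
Qed.

Lemma MD_avoiding_leaf F :
  F \in MD e -> v \notin F -> u \in F /\ deg_in e F u = 1.
Proof.
move=> MDF vF; have /MDP[disF cardF] := MDF.
have not_dis : ~ dissociated (v |: F).
  by move/card_le_psi; rewrite cardsU1 vF cardF ltnn.
have uF : u \in F.
  by apply: contra_notT not_dis => uF; apply: dissociated_setU1_leaf => // /(negP uF).
split=> //; move: MDF; rewrite inE => /andP[/andP[_ /forall_inP degF] _].
move: (degF u uF); rewrite leq_eqVlt ltnS leqn0 => /orP[/eqP //|deg0].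
by case: not_dis; apply: dissociated_setU1_leaf => // _; apply/eqP.
Qed.

Lemma leaf_swap_MD F x :
  F \in MD e -> v \notin F -> x \in F ->
  (u \in F :\ x -> deg_in e (F :\ x) u = 0) -> v |: (F :\ x) \in MD e.
Proof.
move=> /MDP[disF cardF] vF xF u_iso; apply/MDP; split.
  exact: dissociated_setU1_leaf (dissociated_subset (subsetDl F _) disF) u_iso.
by rewrite cardsU1 in_setD1 (negbTE vF) andbF add1n -cardF (cardsD1 x F) xF.
Qed.

Lemma Phi_bar_le_Phi0 : Phi_bar e v <= Phi0 e v.
Proof.
pose f F := v |: (F :\ u).
have f_inj : {in [set F in MD e | v \notin F] &, injective f}.
  move=> F1 F2 /setIdP[MD1 v1] /setIdP[MD2 v2] /(setU1_setD1_eq v1 v2).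
  have [u1 _] := MD_avoiding_leaf MD1 v1; have [u2 _] := MD_avoiding_leaf MD2 v2.
  by move=> F12; rewrite -(setD1K u1) F12 setD1K.
rewrite /Phi_bar /Phi0 -(card_in_imset f_inj); apply: subset_leq_card.
apply/subsetP => _ /imsetP[F /setIdP[MDF vF] ->].
have [uF _] := MD_avoiding_leaf MDF vF.
apply/setIdP; split; first by apply: leaf_swap_MD; rewrite ?in_setD1 ?eqxx.
by rewrite setU11 deg_in_leaf in_setU1 in_setD1 eqxx (negbTE leaf_nb_neq).
Qed.

Lemma MD_leaf_exchange F1 F2 w1 w2 :
  F1 \in MD e -> F2 \in MD e -> v \notin F1 -> v \notin F2 ->
  nbhd e u :&: F1 = [set w1] -> nbhd e u :&: F2 = [set w2] ->
  F1 :\ w1 = F2 :\ w2 -> w1 = w2.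
Proof.
move=> MD1 MD2 v1 v2 N1 N2 F12; case: (eqVneq w1 w2) => // w12; exfalso.
have /MDP[dis1 card1] := MD1; have /MDP[dis2 _] := MD2.
have [u1 _] := MD_avoiding_leaf MD1 v1; have [u2 _] := MD_avoiding_leaf MD2 v2.
have [euw1 w1F1] := nbhd_setI1 N1; have [euw2 w2F2] := nbhd_setI1 N2.
have w2F1 : w2 \notin F1.
  apply/negP => w2F1; have : w2 \in F1 :\ w1 by rewrite in_setD1 eq_sym w12.
  by rewrite F12 in_setD1 eqxx.
have uw2 : u != w2 by apply: contraTneq euw2 => <-; rewrite e_irr.
have vw2 : v != w2 by apply: contraNneq v2 => ->.
have disK : dissociated (v |: (w2 |: (F1 :\ u))).
  apply: dissociated_setU1_leaf.
    exact: dissociated_exchange dis1 dis2 u1 u2 w1F1 euw1 w2F2 euw2 F12.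
  by rewrite in_setU1 in_setD1 eqxx (negbTE uw2).
have := card_le_psi disK.
rewrite !cardsU1 !in_setU1 !in_setD1 (negbTE vw2) (negbTE v1) (negbTE w2F1) !andbF.
by rewrite -card1 (cardsD1 u F1) u1 !add1n ltnn.
Qed.

Lemma Phi_bar_le_Phi1 : Phi_bar e v <= Phi1 e v.
Proof.
have partner F : F \in MD e -> v \notin F -> exists w, nbhd e u :&: F = [set w].
  by move=> MDF vF; have [_ /eqP/cards1P] := MD_avoiding_leaf MDF vF.
pose f F := v |: (F :\: nbhd e u).
have f_inj : {in [set F in MD e | v \notin F] &, injective f}.
  move=> F1 F2 /setIdP[MD1 v1] /setIdP[MD2 v2].
  have [w1 N1] := partner F1 MD1 v1; have [w2 N2] := partner F2 MD2 v2.
  rewrite /f (setD_setI1 N1) (setD_setI1 N2) => /(setU1_setD1_eq v1 v2) F12.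
  have [_ w1F1] := nbhd_setI1 N1; have [_ w2F2] := nbhd_setI1 N2.
  by rewrite -(setD1K w1F1) F12 (MD_leaf_exchange MD1 MD2 v1 v2 N1 N2 F12) setD1K.
rewrite /Phi_bar /Phi1 -(card_in_imset f_inj); apply: subset_leq_card.
apply/subsetP => _ /imsetP[F /setIdP[MDF vF] ->].
have [uF _] := MD_avoiding_leaf MDF vF; have [w Nw] := partner F MDF vF.
have [euw wF] := nbhd_setI1 Nw.
have uw : u != w by apply: contraTneq euw => <-; rewrite e_irr.
rewrite /f (setD_setI1 Nw); apply/setIdP; split.
  by apply: leaf_swap_MD => // _; rewrite /deg_in setIDA Nw setDv cards0.
by rewrite setU11 deg_in_leaf in_setU1 in_setD1 (negbTE leaf_nb_neq) uw uF.
Qed.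

End Leaf.
End Dissociation.

Theorem lemma3p1 (T : finType) (e : rel T) (v : T) :
  is_tree e -> leaf e v -> psi_in e [set~ v] = psi e ->
  Phi_bar e v <= minn (Phi0 e v) (Phi1 e v) /\ 3 * Phi_bar e v <= Phi e.
Proof.
move=> [[e_sym e_irr] _] /cards1P[u nbhd_v] _.
have bar0 := Phi_bar_le_Phi0 e_sym e_irr nbhd_v.
have bar1 := Phi_bar_le_Phi1 e_sym e_irr nbhd_v.
split; first by rewrite leq_min bar0 bar1.
apply: leq_trans (Phi_classes e v).
by rewrite mulSn mul2n -addnn addnA !leq_add.
Qed.
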